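(* Let $G$ be a bipartite TRVG with a rectangle representation in which the rectangles of one part are $g_1,\dots,g_p$ ($p\ge 1$) and the rectangles of the other part are $r_1,\dots,r_q$. If, for each $i\in\{1,\dots,p\}$, $g_i$ sees exactly $\alpha_i$ of the rectangles $r_1,\dots,r_q$ horizontally, then \[ q\ \ge\ \alpha_1+\alpha_2+\cdots+\alpha_p-(p-1). \]
   Context: A graph $G$ is a transparent rectangle visibility graph (TRVG) if its vertices can be represented by a collection of pairwise non-overlapping rectangles in the plane whose sides are parallel to the coordinate axes, one per vertex, such that two distinct vertices are adjacent if and only if there is a horizontal or a vertical line intersecting the interiors of both of their rectangles (other rectangles do not block visibility). Two rectangles see each other horizontally if some horizontal line meets the interiors of both. *)

From mathcomp Require Import all_boot.
From Stdlib Require Import Reals.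

Record rect := Rect { rx1 : R; rx2 : R; ry1 : R; ry2 : R }.

Definition rect_ok (a : rect) : Prop := (rx1 a < rx2 a)%R /\ (ry1 a < ry2 a)%R.

Definition in_interior (a : rect) (x y : R) : Prop :=
  (rx1 a < x < rx2 a)%R /\ (ry1 a < y < ry2 a)%R.

Definition overlap (a b : rect) : Prop :=
  exists x y, in_interior a x y /\ in_interior b x y.

Definition sees_h (a b : rect) : Prop :=
  exists t, (exists x, in_interior a x t) /\ (exists x', in_interior b x' t).

Definition sees_v (a b : rect) : Prop :=
  exists t, (exists y, in_interior a t y) /\ (exists y', in_interior b t y').

Definition sees (a b : rect) : Prop := sees_h a b \/ sees_v a b.

(** Horizontal visibility depends only on the open y-projections of the
rectangles.  Take a rectangle whose projection has the lowest upper end: every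
rectangle of the other part that it sees contains the points just below that
end, so two of them would see each other, which bipartiteness forbids.  Hence
it sees at most one, and deleting such rectangles one at a time shows that the
horizontal visibility graph is a forest on the [p + q] rectangles: it has at
most [p + q - 1] edges, [alpha_i] of them at [g_i]. *)

From mathcomp Require Import all_boot.
From Stdlib Require Import Reals Lra.

Set Implicit Arguments.
Unset Strict Implicit.

Lemma exists_min_seq (T : eqType) (f : T -> R) (x : T) (s : seq T) :
  exists2 u, u \in x :: s & {in x :: s, forall v, (f u <= f v)%R}.
Proof.
elim: s x => [|y s IH] x.
  by exists x => [|v]; rewrite ?mem_seq1 // => /eqP ->; apply: Rle_refl.
have [u us u_min] := IH y.
have [fxu | fux] := Rle_lt_dec (f x) (f u).
  exists x; first exact: mem_head.
  move=> v; rewrite inE => /predU1P [-> | /u_min]; lra.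
exists u; first by rewrite inE us orbT.
move=> v; rewrite inE => /predU1P [-> | /u_min //]; lra.
Qed.

Lemma exists_min_set (T : finType) (f : T -> R) (A : {set T}) :
  A != set0 -> exists2 u, u \in A & {in A, forall v, (f u <= f v)%R}.
Proof.
case/set0Pn => a aA; case E : (enum A) => [|x s].
  by move: aA; rewrite -mem_enum E.
have [u us u_min] := exists_min_seq f x s.
exists u => [|v vA]; first by rewrite -mem_enum E.
by apply: u_min; rewrite -E mem_enum.
Qed.

Lemma sum_card_sections (I J : finType) (S : I -> {set J}) :
  \sum_i #|S i| = #|[set x : I * J | x.2 \in S x.1]|.
Proof.
rewrite -sum1_card; under eq_bigr => i _ do rewrite -sum1_card.
by rewrite pair_big_dep; apply: eq_bigl => x; rewrite inE.
Qed.

Section ForestEdges.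

Variables (T : finType) (e : rel T).

Definition edges (A : {set T}) : {set T * T} :=
  [set x | [&& x.1 \in A, x.2 \in A & e x.1 x.2]].

Definition edges_at (A : {set T}) (u : T) : {set T * T} :=
  [set x in edges A | (x.1 == u) || (x.2 == u)].

Lemma edges_delete (A : {set T}) (u : T) :
  edges A = edges (A :\ u) :|: edges_at A u.
Proof.
apply/setP => -[a b]; rewrite !inE /=.
case: (a =P u) => [->|_]; case: (b =P u) => [->|_]; by rewrite /= ?andbF ?andbT ?orbF ?orbT.
Qed.

Hypothesis e_irr : irreflexive e.

Lemma edges_set1 (u : T) : edges [set u] = set0.
Proof.
apply/setP => -[a b]; rewrite !inE /=.
by apply/and3P => -[/eqP -> /eqP ->]; rewrite e_irr.
Qed.

Hypothesis leaf_exists :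
  forall A : {set T}, A != set0 -> exists2 u, u \in A & #|edges_at A u| <= 1.

Lemma card_edges_lt (A : {set T}) : A != set0 -> #|edges A| < #|A|.
Proof.
move: {2}#|A| (leqnn #|A|) => n; elim: n A => [|n IH] A.
  by rewrite leqn0 cards_eq0 => /eqP ->; rewrite eqxx.
move=> A_le A0; have [u uA u_leaf] := leaf_exists A0.
have [/eqP Au0 | Au0] := boolP (A :\ u == set0).
  have -> : A = [set u] by rewrite -(setD1K uA) Au0 setU0.
  by rewrite edges_set1 cards0 cards1.
have cardA : #|A| = #|A :\ u|.+1 by rewrite (cardsD1 u A) uA.
rewrite (edges_delete A u) (leq_ltn_trans (leq_card_setU _ _)) // cardA.
apply: leq_trans (leq_add (leqnn _) u_leaf) _; rewrite addn1.
by apply: IH Au0; rewrite -ltnS -cardA.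
Qed.

End ForestEdges.

Section BipartiteIntervals.

Variables (T : finType) (side : T -> bool) (lo hi : T -> R) (e : rel T).

Definition meets (u v : T) : Prop :=
  exists t, (lo u < t < hi u)%R /\ (lo v < t < hi v)%R.

Lemma meetsC (u v : T) : meets u v -> meets v u.
Proof. by move=> [t [? ?]]; exists t. Qed.

(* Both intervals contain every point of the interval of [u] just below [hi u]. *)
Lemma meets_below_min_hi (u v w : T) : (hi u <= hi v)%R -> (hi u <= hi w)%R ->
  meets u v -> meets u w -> meets v w.
Proof.
move=> uv uw [t1 [[? ?] [? ?]]] [t2 [[? ?] [? ?]]].
have := Rmax_l t1 t2; have := Rmax_r t1 t2.
by exists (Rmax t1 t2); split; split; try apply: Rmax_lub_lt; lra.
Qed.

Hypothesis e_meets : forall u v, e u v -> meets u v.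
Hypothesis e_side : forall u v, e u v -> side u && ~~ side v.
Hypothesis side_disjoint : forall u v, u != v -> side u = side v -> ~ meets u v.

Lemma edges_at_min_hi (A : {set T}) (u : T) :
  u \in A -> {in A, forall v, (hi u <= hi v)%R} -> #|edges_at e A u| <= 1.
Proof.
move=> uA u_min; have same_nbr v w : meets u v -> meets u w ->
    v \in A -> w \in A -> side v = side w -> v = w.
  move=> muv muw vA wA svw; apply/eqP/negPn/negP => vw.
  exact: side_disjoint vw svw (meets_below_min_hi (u_min v vA) (u_min w wA) muv muw).
apply/card_le1_eqP => -[a b] [c d]; rewrite !inE /=.
move=> /andP [/and3P [aA bA eab] abu] /andP [/and3P [cA dA ecd] cdu].
have /andP [sa sb] := e_side eab; have /andP [sc sd] := e_side ecd.
case/orP: abu => /eqP au; case/orP: cdu => /eqP cu; subst.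
- congr pair; apply: (same_nbr _ _ (e_meets ecd) (e_meets eab)) => //.
  by rewrite (negbTE sd) (negbTE sb).
- by move: sa; rewrite (negbTE sd).
- by move: sb; rewrite sc.
- congr pair; apply: (same_nbr _ _ (meetsC (e_meets ecd)) (meetsC (e_meets eab))) => //.
  by rewrite sc sa.
Qed.

Lemma card_edges_lt_intervals (A : {set T}) : A != set0 -> #|edges e A| < #|A|.
Proof.
apply: card_edges_lt => [u | B B0].
  by apply/negP => /e_side /andP [->].
have [u uB u_min] := exists_min_set hi B0.
by exists u; last exact: edges_at_min_hi.
Qed.

End BipartiteIntervals.

Lemma sees_h_spans (a b : rect) : rect_ok a -> rect_ok b ->
  sees_h a b <-> exists t, (ry1 a < t < ry2 a)%R /\ (ry1 b < t < ry2 b)%R.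
Proof.
move=> [ax _] [bx _]; split=> [[t [[x [_ ?]] [x' [_ ?]]]] | [t [? ?]]].
  by exists t.
by exists t; split; [exists ((rx1 a + rx2 a) / 2)%R | exists ((rx1 b + rx2 b) / 2)%R];
  split=> //; lra.
Qed.

Lemma card_sees_h_pairs_lt (p q : nat) (g : 'I_p -> rect) (r : 'I_q -> rect)
    (S : 'I_p -> {set 'I_q}) :
  (0 < p)%N -> (forall i, rect_ok (g i)) -> (forall j, rect_ok (r j)) ->
  (forall i i', i <> i' -> ~ sees (g i) (g i')) ->
  (forall j j', j <> j' -> ~ sees (r j) (r j')) ->
  (forall i j, j \in S i -> sees_h (g i) (r j)) ->
  #|[set x : 'I_p * 'I_q | x.2 \in S x.1]| < p + q.
Proof.
move=> p_gt0 g_ok r_ok g_indep r_indep S_sees.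
pose rect_of (v : 'I_p + 'I_q) := match v with inl i => g i | inr j => r j end.
pose e : rel ('I_p + 'I_q) := fun u v =>
  match u, v with inl i, inr j => j \in S i | _, _ => false end.
have : #|edges e setT| < #|[set: 'I_p + 'I_q]|.
  apply: (@card_edges_lt_intervals _ (fun v => if v is inl _ then true else false)
    (fun v => ry1 (rect_of v)) (fun v => ry2 (rect_of v))).
  - by move=> [i|?] [?|j] //= /S_sees /(sees_h_spans (g_ok i) (r_ok j)).
  - by move=> [?|?] [?|?].
  - move=> [i|j] [i'|j'] //= ne _ meet.
    + apply: (g_indep i i'); first by move=> ii'; rewrite ii' eqxx in ne.
      by left; apply/(sees_h_spans (g_ok i) (g_ok i')).
    + apply: (r_indep j j'); first by move=> jj'; rewrite jj' eqxx in ne.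
      by left; apply/(sees_h_spans (r_ok j) (r_ok j')).
  - by apply/set0Pn; exists (inl (Ordinal p_gt0)).
rewrite cardsT card_sum !card_ord; apply: leq_ltn_trans.
pose edge_of (x : 'I_p * 'I_q) : ('I_p + 'I_q) * ('I_p + 'I_q) := (inl x.1, inr x.2).
rewrite -(card_imset _ (f := edge_of)); last by move=> [? ?] [? ?] [-> ->].
by apply/subset_leq_card/subsetP => _ /imsetP [[i j] ij ->]; rewrite !inE in ij *.
Qed.

Theorem lemma2 (p q : nat) (g : 'I_p -> rect) (r : 'I_q -> rect)
  (alpha : 'I_p -> nat) :
  (0 < p)%N ->
  (forall i, rect_ok (g i)) -> (forall j, rect_ok (r j)) ->
  (* pairwise non-overlapping rectangles *)
  (forall i i', i <> i' -> ~ overlap (g i) (g i')) ->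
  (forall j j', j <> j' -> ~ overlap (r j) (r j')) ->
  (forall i j, ~ overlap (g i) (r j)) ->
  (* the represented TRVG is bipartite with parts {g_i} and {r_j} *)
  (forall i i', i <> i' -> ~ sees (g i) (g i')) ->
  (forall j j', j <> j' -> ~ sees (r j) (r j')) ->
  (* g_i sees exactly alpha_i of the r_j horizontally *)
  (forall i, exists S : {set 'I_q},
      #|S| = alpha i /\ (forall j, j \in S <-> sees_h (g i) (r j))) ->
  (\sum_(i < p) alpha i <= q + (p - 1))%N.
Proof.
move=> p_gt0 g_ok r_ok _ _ _ g_indep r_indep /fin_all_exists [S HS].
have := card_sees_h_pairs_lt p_gt0 g_ok r_ok g_indep r_indep (fun i j => ((HS i).2 j).1).
rewrite (eq_bigr (fun i => #|S i|)) => [|i _]; last by case: (HS i).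
move=> lt_pq; rewrite sum_card_sections -ltnS; apply: leq_trans lt_pq _.
by rewrite -addnS subn1 prednK // addnC.
Qed.
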